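(* Let $k\to A$ be a homomorphism of noetherian rings and $M_1,M_2$ finitely generated $A$-modules, and let $\widetilde D:\mathcal J^N(M_1/k)\to M_2$ be an $A$-linear map for some $N\in\mathbb N_0$. (1) If $\operatorname{ann}(M_2)=I$, there is some $K\in\mathbb N$ such that $\widetilde D$ factors over a map $\widetilde{D'}:\mathcal J^N((M_1/I^KM_1)/k)\to M_2$ (through the natural surjection $\mathcal J^N(M_1/k)\to\mathcal J^N((M_1/I^KM_1)/k)$). (2) If $\operatorname{ann}(M_1)=I$, there is some $K\in\mathbb N$ such that the image of $\widetilde D$ is a submodule annihilated by $I^K$.
   Context: For a ring homomorphism $k\to A$ and an $A$-module $M$, $I_{A/k}=\ker(A\otimes_kA\to A)$ and $\mathcal J^N(M/k)=(A\otimes_kM)/I_{A/k}^{N+1}(A\otimes_kM)$; ''$A$-linear'' refers to the $A$-module structure of $\mathcal J^N(M/k)$ via the first factor $a\mapsto a\otimes1$. *)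

From HB Require Import structures.
From mathcomp Require Import all_boot all_order all_algebra.
Set Implicit Arguments. Unset Strict Implicit. Unset Printing Implicit Defensive.
Import GRing.Theory.
Local Open Scope ring_scope.

Section Alg.
Variable R : comPzRingType.

Definition is_ideal (I : R -> Prop) : Prop :=
  [/\ I 0, (forall x y, I x -> I y -> I (x + y)) & (forall a x, I x -> I (a * x))].

Definition noetherian_ring : Prop :=
  forall I : R -> Prop, is_ideal I ->
    exists s : seq R, (forall y, y \in s -> I y) /\
      forall x, I x <-> exists c : 'I_(size s) -> R, x = \sum_(i < size s) c i * s`_i.

Definition ideal_pow (I : R -> Prop) (K : nat) : R -> Prop := fun x =>
  exists s : seq (seq R),
    (forall t, t \in s -> size t = K /\ forall a, a \in t -> I a) /\
    x = \sum_(t <- s) \prod_(a <- t) a.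

Variable M : lmodType R.

Definition fin_gen_module : Prop :=
  exists s : seq M, forall m, exists c : 'I_(size s) -> R,
    m = \sum_(i < size s) c i *: s`_i.

Definition ann : R -> Prop := fun a => forall m : M, a *: m = 0.

Definition ideal_mul_mod (J : R -> Prop) : M -> Prop := fun m =>
  exists s : seq (R * M), (forall p, p \in s -> J p.1) /\
    m = \sum_(p <- s) p.1 *: p.2.
End Alg.

(* An A-linear map  Dt : A (x)_k M -> P  (A acting on the first factor) is the
   same as a function D : A -> M -> P, D a m = Dt (a (x) m), which is
   biadditive, k-balanced and A-linear in the first argument. *)
Section Jets.
Variables (k A : comPzRingType) (phi : {rmorphism k -> A}).

Definition tensor_lin (M P : lmodType A) (D : A -> M -> P) : Prop :=
  [/\ (forall a a' m, D (a + a') m = D a m + D a' m),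
      (forall a m m', D a (m + m') = D a m + D a m'),
      (forall (l : k) a m, D (a * phi l) m = D a (phi l *: m)) &
      (forall b a m, D (b * a) m = b *: D a m)].

(* An element of A (x)_k A represented by a finite list of pure tensors
   x (x) y; I_{A/k} = ker(A (x)_k A -> A) consists of those with sum x*y = 0. *)
Definition in_IAk (t : seq (A * A)) : bool := \sum_(p <- t) p.1 * p.2 == 0.

Definition tmul (s t : seq (A * A)) : seq (A * A) :=
  [seq (p.1 * q.1, p.2 * q.2) | p <- s, q <- t].
Definition tprod (ts : seq (seq (A * A))) : seq (A * A) :=
  foldr tmul [:: (1, 1)] ts.

(* Dt (u . (b (x) m)) for u in A (x)_k A acting on A (x)_k M by
   (x (x) y).(b (x) m) = x b (x) y m. *)
Definition tact (M P : lmodType A) (D : A -> M -> P) (u : seq (A * A)) b m : P :=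
  \sum_(p <- u) D (p.1 * b) (p.2 *: m).

(* D : A -> M -> P represents an A-linear map
   J^N(M/k) = (A (x)_k M) / I^{N+1} (A (x)_k M)  -> P :
   it is A-linear on A (x)_k M and vanishes on I^{N+1}(A (x)_k M), which is
   spanned by the u.(b (x) m) with u a product of N+1 elements of I_{A/k}. *)
Definition jet_map (N : nat) (M P : lmodType A) (D : A -> M -> P) : Prop :=
  tensor_lin D /\
  forall ts : seq (seq (A * A)), size ts = N.+1 -> all in_IAk ts ->
    forall b m, tact D (tprod ts) b m = 0.

Definition jet_image (M P : lmodType A) (D : A -> M -> P) : P -> Prop :=
  fun y => exists s : seq (A * M), y = \sum_(p <- s) D p.1 p.2.
End Jets.

From HB Require Import structures.
From mathcomp Require Import all_boot all_order all_algebra.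
Import GRing.Theory.
Local Open Scope ring_scope.

(* For x in A, the tensor d x = x (x) 1 - 1 (x) x lies in I_{A/k}. If x_0, ..., x_N
   annihilate M2, expanding (d x_0 ... d x_N).(b (x) m) kills every term carrying
   some x_i in the first factor (D is A-linear there), so D vanishes on
   (b, x_0 ... x_N m): D already factors through M1 / I^{N+1} M1. If instead the
   x_i annihilate M1, only the term with all x_i in the first factor survives,
   so x_0 ... x_N annihilates the image of D. *)

Definition tdiff {A : comPzRingType} (x : A) : seq (A * A) := [:: (x, 1); (-1, x)].

Lemma in_IAk_tdiff (A : comPzRingType) (x : A) : in_IAk (tdiff x).
Proof. by rewrite /in_IAk !big_cons big_nil /= mulr1 mulN1r addr0 subrr. Qed.

Lemma all_in_IAk_tdiff (A : comPzRingType) (xs : seq A) :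
  all (@in_IAk A) (map (@tdiff A) xs).
Proof. by elim: xs => //= x xs ->; rewrite in_IAk_tdiff. Qed.

Lemma tprod_tdiff_cons (A : comPzRingType) (x : A) (xs : seq A) :
  tprod (tdiff x :: map (@tdiff A) xs) =
  [seq (x * q.1, 1 * q.2) | q <- tprod (map (@tdiff A) xs)] ++
  ([seq (-1 * q.1, x * q.2) | q <- tprod (map (@tdiff A) xs)] ++ [::]).
Proof. by []. Qed.

Section TensorLinear.
Context {k A : comPzRingType} {phi : {rmorphism k -> A}}.
Context {M1 M2 : lmodType A} {D : A -> M1 -> M2}.
Hypothesis D_tensor_lin : tensor_lin phi D.

Lemma tensor_linD a m m' : D a (m + m') = D a m + D a m'.
Proof. by case: D_tensor_lin. Qed.

Lemma tensor_lin0 a : D a 0 = 0.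
Proof. by apply: (@addrI _ (D a 0)); rewrite -tensor_linD !addr0. Qed.

Lemma tensor_linZ b a m : D (b * a) m = b *: D a m.
Proof. by case: D_tensor_lin. Qed.

Lemma tensor_lin_sum (I : Type) (r : seq I) a (F : I -> M1) :
  D a (\sum_(i <- r) F i) = \sum_(i <- r) D a (F i).
Proof. exact: (big_morph (D a) (tensor_linD a) (tensor_lin0 a)). Qed.

Lemma tact_cat (u v : seq (A * A)) b m :
  tact D (u ++ v) b m = tact D u b m + tact D v b m.
Proof. by rewrite /tact big_cat. Qed.

Lemma tact_tdiff_ann_codom (xs : seq A) b m :
  (forall x, x \in xs -> forall v : M2, x *: v = 0) ->
  tact D (tprod (map (@tdiff A) xs)) b m =
    D ((-1) ^+ size xs * b) ((\prod_(x <- xs) x) *: m).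
Proof.
elim: xs b m => [|x xs IH] b m xs_ann.
  by rewrite /tact /= big_cons big_nil addr0 scale1r big_nil scale1r mul1r.
have x_ann := xs_ann x (mem_head x xs).
rewrite tprod_tdiff_cons !tact_cat /tact big_nil addr0 !big_map.
rewrite big1 ?add0r => [|q _]; last by rewrite -mulrA tensor_linZ x_ann.
have -> : \sum_(q <- tprod (map (@tdiff A) xs)) D (-1 * q.1 * b) ((x * q.2) *: m)
    = tact D (tprod (map (@tdiff A) xs)) (- b) (x *: m).
  by apply: eq_bigr => q _; rewrite mulN1r mulNr mulrN scalerA [x * _]mulrC.
rewrite IH => [|y y_xs]; last by apply: xs_ann; rewrite in_cons y_xs orbT.
by rewrite big_cons scalerA exprS mulrN mulN1r mulNr [x * _]mulrC.
Qed.

Lemma tact_tdiff_ann_dom (xs : seq A) b m :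
  (forall x, x \in xs -> forall v : M1, x *: v = 0) ->
  tact D (tprod (map (@tdiff A) xs)) b m = D ((\prod_(x <- xs) x) * b) m.
Proof.
elim: xs b => [|x xs IH] b xs_ann.
  by rewrite /tact /= big_cons big_nil addr0 scale1r big_nil.
have x_ann := xs_ann x (mem_head x xs).
rewrite tprod_tdiff_cons !tact_cat /tact big_nil addr0 !big_map.
rewrite [X in _ + X]big1 ?addr0 => [|q _]; last first.
  by rewrite mulrC -scalerA x_ann tensor_lin0.
have -> : \sum_(q <- tprod (map (@tdiff A) xs)) D (x * q.1 * b) ((1 * q.2) *: m)
    = tact D (tprod (map (@tdiff A) xs)) (x * b) m.
  by apply: eq_bigr => q _; rewrite mul1r mulrCA mulrA.
rewrite IH => [|y y_xs]; last by apply: xs_ann; rewrite in_cons y_xs orbT.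
by rewrite big_cons mulrCA mulrA.
Qed.

End TensorLinear.

Section JetMap.
Context {k A : comPzRingType} {phi : {rmorphism k -> A}}.
Context {M1 M2 : lmodType A} {N : nat} {D : A -> M1 -> M2}.
Hypothesis D_jet : jet_map phi N D.

Let D_tensor_lin : tensor_lin phi D := D_jet.1.

Lemma jet_map_tdiff b m {xs : seq A} :
  size xs = N.+1 -> tact D (tprod (map (@tdiff A) xs)) b m = 0.
Proof.
by move=> xs_size; apply: D_jet.2; rewrite ?size_map ?all_in_IAk_tdiff.
Qed.

Lemma jet_map_vanish_ann_codom a m :
  ideal_mul_mod (ideal_pow (ann M2) N.+1) m -> D a m = 0.
Proof.
case=> s [s_pow ->]; rewrite (tensor_lin_sum D_tensor_lin).
apply: big1_seq => p /andP[_ ps].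
have [ts [ts_prod ->]] := s_pow p ps.
rewrite scaler_suml (tensor_lin_sum D_tensor_lin).
apply: big1_seq => t /andP[_ t_ts].
have [t_size t_ann] := ts_prod t t_ts.
have := jet_map_tdiff ((-1) ^+ size t * a) p.2 t_size.
rewrite (tact_tdiff_ann_codom D_tensor_lin) //.
by rewrite mulrA -exprMn mulrNN mulr1 expr1n mul1r.
Qed.

Lemma jet_image_ann_dom x y :
  ideal_pow (ann M1) N.+1 x -> jet_image D y -> x *: y = 0.
Proof.
move=> [ts [ts_prod ->]] [s ->].
rewrite scaler_suml; apply: big1_seq => t /andP[_ t_ts].
rewrite scaler_sumr; apply: big1_seq => p /andP[_ ps].
have [t_size t_ann] := ts_prod t t_ts.
rewrite -(tensor_linZ D_tensor_lin) -(tact_tdiff_ann_dom D_tensor_lin) //.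
exact: jet_map_tdiff.
Qed.

Lemma jet_map_factor (Q : lmodType A) (q : {linear M1 -> Q}) :
  (forall y, exists m, q m = y) -> (forall a m, q m = 0 -> D a m = 0) ->
  exists D' : A -> Q -> M2, jet_map phi N D' /\ forall a m, D a m = D' a (q m).
Proof.
move=> q_surj D_ker.
have D_q a m m' : q m = q m' -> D a m = D a m'.
  move=> qmm'; rewrite -(subrK m' m) (tensor_linD D_tensor_lin) D_ker ?add0r //.
  by rewrite linearB /= qmm' subrr.
have lift y : {m : M1 | q m == y}.
  by apply: sigW; have [m qm] := q_surj y; exists m; apply/eqP.
have q_lift y : q (sval (lift y)) = y by case: (lift y) => m /= /eqP.
exists (fun a y => D a (sval (lift y))); split; last first.
  by move=> a m; apply: D_q; rewrite q_lift.
case: D_tensor_lin => D_addl D_addr D_balanced D_scale.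
split; first split.
- by move=> a a' y; rewrite D_addl.
- by move=> a y y'; rewrite -D_addr; apply: D_q; rewrite linearD /= !q_lift.
- by move=> l a y; rewrite D_balanced; apply: D_q; rewrite linearZ /= !q_lift.
- by move=> b a y; rewrite D_scale.
- move=> ts ts_size ts_IAk b y.
  rewrite -(D_jet.2 ts ts_size ts_IAk b (sval (lift y))).
  by apply: eq_bigr => p _; apply: D_q; rewrite linearZ /= !q_lift.
Qed.

End JetMap.

Theorem mainTheorem20 (k A : comPzRingType) (phi : {rmorphism k -> A})
    (M1 M2 : lmodType A) (N : nat) (D : A -> M1 -> M2) :
  noetherian_ring k -> noetherian_ring A ->
  fin_gen_module M1 -> fin_gen_module M2 ->
  jet_map phi N D ->
  (* (1) I = ann(M2): D factors through J^N((M1/I^K M1)/k) *)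
  (exists K : nat, (0 < K)%N /\
     forall (Q : lmodType A) (q : {linear M1 -> Q}),
       (forall y : Q, exists m, q m = y) ->
       (forall m, q m = 0 <-> ideal_mul_mod (ideal_pow (ann M2) K) m) ->
       exists D' : A -> Q -> M2, jet_map phi N D' /\
         forall a m, D a m = D' a (q m))
  /\
  (* (2) I = ann(M1): the image of D is annihilated by I^K *)
  (exists K : nat, (0 < K)%N /\
     forall x y, ideal_pow (ann M1) K x -> jet_image D y -> x *: y = 0).
Proof.
move=> _ _ _ _ D_jet; split; exists N.+1; split => //.
- move=> Q q q_surj q_ker; apply: jet_map_factor => // a m /q_ker.
  exact: (jet_map_vanish_ann_codom D_jet a).
- exact: (jet_image_ann_dom D_jet).
Qed.
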